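(* Let $H$ be a finite-dimensional complex Hilbert space, $u\in H$ a unit vector, $P=|u\rangle\langle u|$, and $R\in B(H)_+$. Define $R_0:=R$ and $R_{n+1}:=R_n^{1/2}(I-P)R_n^{1/2}$ for $n\ge0$. For each $n\ge0$ set $K_n:=\ker R_n$ and $E_n:=K_n^\perp=\mathrm{ran}(R_n)$. Then: (1) $K_n\subseteq K_{n+1}$ and $E_{n+1}\subseteq E_n$ for all $n\ge0$. (2) There exist $N\ge0$ and a subspace $E\subseteq H$ such that $E_n=E$ for all $n\ge N$. (3) For every $n\ge N$, $E$ reduces $R_n$, and $R_n=0\oplus T_n$ with respect to $H=E^\perp\oplus E$, where $T_n:=R_n|_E\in B(E)_+$ is strictly positive on $E$. (4) Let $u_E:=P_Eu\in E$, where $P_E$ is the orthogonal projection onto $E$. Then for every $n\ge N$, $$T_{n+1}=T_n^{1/2}\bigl(I_E-|u_E\rangle\langle u_E|\bigr)T_n^{1/2}.$$ (5) If $u_E=0$, then $T_{n+1}=T_n$ for all $n\ge N$. If $u_E\neq0$, then $0<\|u_E\|<1$ and $\det T_{n+1}=(1-\|u_E\|^2)\det T_n$ for $n\ge N$; hence $\det T_n=(1-\|u_E\|^2)^{n-N}\det T_N$ for $n\ge N$, and in particular $\det T_n\to0$.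
   Context: For vectors $x,y$, $|x\rangle\langle y|$ denotes the operator $z\mapsto\langle y,z\rangle x$. $B(H)_+$ denotes positive operators; $R^{1/2}$ is the positive square root. $\det$ of an operator on $E$ is the determinant on the space $E$. *)

From HB Require Import structures.
From Stdlib Require Import ClassicalEpsilon.
From mathcomp Require Import all_boot all_order all_algebra.
From mathcomp Require Import reals.
From mathcomp.real_closed Require Import complex.
Set Implicit Arguments. Unset Strict Implicit. Unset Printing Implicit Defensive.
Import Order.TTheory GRing.Theory Num.Theory.
Local Open Scope ring_scope.

(* Finite-dimensional Hilbert space H = 'cV[C]_n (column vectors), C a
   numeric closed field (instantiated with the complex numbers R[i],
   R : realType, in the statement). *)

Section Defs.
Variable C : numClosedFieldType.

Definition adjmx m p (A : 'M[C]_(m, p)) : 'M[C]_(p, m) := (map_mx Num.conj A)^T.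

(* inner product <x, y>, conjugate-linear in x, linear in y *)
Definition inner m (x y : 'cV[C]_m) : C := (adjmx x *m y) 0 0.

Definition vnorm m (x : 'cV[C]_m) : C := sqrtC (inner x x).

Definition ketbra m (x y : 'cV[C]_m) : 'M[C]_m := x *m adjmx y.

Definition psd m (A : 'M[C]_m) : Prop := forall x : 'cV[C]_m, 0 <= inner x (A *m x).

Definition psqrt m (A : 'M[C]_m) : 'M[C]_m :=
  epsilon (inhabits 0) (fun S => psd S /\ S *m S = A).

Fixpoint Rseq m (P R : 'M[C]_m) (k : nat) : 'M[C]_m :=
  match k with
  | 0 => R
  | k'.+1 => psqrt (Rseq P R k') *m (1 - P) *m psqrt (Rseq P R k')
  end.

Definition kerP m (A : 'M[C]_m) : 'cV[C]_m -> Prop := fun x => A *m x = 0.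
Definition orthP m (S : 'cV[C]_m -> Prop) : 'cV[C]_m -> Prop :=
  fun x => forall y, S y -> inner y x = 0.
Definition colspan m d (V : 'M[C]_(m, d)) : 'cV[C]_m -> Prop :=
  fun x => exists y : 'cV[C]_d, x = V *m y.
End Defs.

From HB Require Import structures.
From Stdlib Require Import ClassicalEpsilon Classical.
From mathcomp Require Import all_boot all_order all_algebra.
From mathcomp Require Import reals.
From mathcomp.real_closed Require Import complex.
Set Implicit Arguments. Unset Strict Implicit. Unset Printing Implicit Defensive.
Import Order.TTheory GRing.Theory Num.Theory.
Local Open Scope ring_scope.

(* Each R_{k+1} = S (I - P) S, with S = R_k^{1/2}, is positive and vanishes on
   ker R_k, so the ranges E_k decrease; their dimensions are natural numbers,
   so they are eventually equal to some E.  Once the range is E, R_k = V T_k V^*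
   for an isometry V onto E, hence R_k^{1/2} = V T_k^{1/2} V^*, and compressing
   the recursion by V gives T_{k+1} = T_k^{1/2} (I - |u_E><u_E|) T_k^{1/2}.
   Sylvester's identity det (I - |x><y|) = 1 - <y, x> then gives
   det T_{k+1} = (1 - |u_E|^2) det T_k.  Since every T_k is positive definite
   this factor is nonzero, so |u_E| < 1 and the determinants decay
   geometrically. *)

Section Adjoint.
Variable C : numClosedFieldType.
Implicit Types (m p q : nat).

Lemma adjmxE m p (A : 'M[C]_(m, p)) : adjmx A = map_mx Num.conj A^T.
Proof. by rewrite /adjmx map_trmx. Qed.

Lemma adjmxK m p (A : 'M[C]_(m, p)) : adjmx (adjmx A) = A.
Proof. by apply/matrixP=> i j; rewrite /adjmx !mxE conjCK. Qed.

Lemma adjmx_inj m p : injective (@adjmx C m p).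
Proof. exact: can_inj (@adjmxK m p). Qed.

Lemma adjmxM m p q (A : 'M[C]_(m, p)) (B : 'M[C]_(p, q)) :
  adjmx (A *m B) = adjmx B *m adjmx A.
Proof. by rewrite /adjmx map_mxM trmx_mul. Qed.

Lemma adjmxD m p (A B : 'M[C]_(m, p)) : adjmx (A + B) = adjmx A + adjmx B.
Proof. by rewrite /adjmx map_mxD linearD. Qed.

Lemma adjmxB m p (A B : 'M[C]_(m, p)) : adjmx (A - B) = adjmx A - adjmx B.
Proof. by rewrite /adjmx map_mxB linearB. Qed.

Lemma adjmxZ m p a (A : 'M[C]_(m, p)) : adjmx (a *: A) = a^* *: adjmx A.
Proof. by apply/matrixP=> i j; rewrite /adjmx !mxE rmorphM. Qed.

Lemma adjmx1 m : adjmx (1%:M : 'M[C]_m) = 1%:M.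
Proof. by rewrite /adjmx map_mx1 trmx1. Qed.

Lemma adjmx0 m p : adjmx (0 : 'M[C]_(m, p)) = 0.
Proof. by apply/matrixP=> i j; rewrite /adjmx !mxE conjC0. Qed.

Lemma adjmx_eq0 m p (A : 'M[C]_(m, p)) : (adjmx A == 0) = (A == 0).
Proof. by rewrite -adjmx0 (inj_eq (@adjmx_inj _ _)). Qed.

Lemma innerE m (x y : 'cV[C]_m) : inner x y = \sum_i (x i 0)^* * y i 0.
Proof. by rewrite /inner !mxE; apply: eq_bigr => i _; rewrite /adjmx !mxE. Qed.

Lemma adjmx_mulmx_col m (x y : 'cV[C]_m) : adjmx x *m y = (inner x y)%:M.
Proof. exact: mx11_scalar. Qed.

Lemma inner_adjmx m p (A : 'M[C]_(m, p)) x y :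
  inner x (A *m y) = inner (adjmx A *m x) y.
Proof. by rewrite /inner adjmxM adjmxK mulmxA. Qed.

Lemma innerC m (x y : 'cV[C]_m) : inner y x = (inner x y)^*.
Proof.
rewrite !innerE rmorph_sum; apply: eq_bigr => i _.
by rewrite rmorphM /= conjCK mulrC.
Qed.

Lemma innerDr m (x y z : 'cV[C]_m) : inner x (y + z) = inner x y + inner x z.
Proof. by rewrite /inner mulmxDr mxE. Qed.

Lemma innerDl m (x y z : 'cV[C]_m) : inner (y + z) x = inner y x + inner z x.
Proof. by rewrite /inner adjmxD mulmxDl mxE. Qed.

Lemma innerBr m (x y z : 'cV[C]_m) : inner x (y - z) = inner x y - inner x z.
Proof. by rewrite /inner mulmxBr !mxE. Qed.

Lemma innerZr m a (x y : 'cV[C]_m) : inner x (a *: y) = a * inner x y.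
Proof. by rewrite /inner -scalemxAr mxE. Qed.

Lemma innerZl m a (x y : 'cV[C]_m) : inner (a *: y) x = a^* * inner y x.
Proof. by rewrite /inner adjmxZ -scalemxAl mxE. Qed.

Lemma inner0r m (x : 'cV[C]_m) : inner x 0 = 0.
Proof. by rewrite /inner mulmx0 mxE. Qed.

Lemma inner0l m (x : 'cV[C]_m) : inner 0 x = 0.
Proof. by rewrite /inner adjmx0 mul0mx mxE. Qed.

Lemma inner_deltal m (i : 'I_m) (x : 'cV[C]_m) : inner (delta_mx i 0) x = x i 0.
Proof.
rewrite innerE (bigD1 i) //= big1 => [|k /negPf ki]; rewrite !mxE ?ki ?eqxx /=.
  by rewrite conjC1 mul1r addr0.
by rewrite conjC0 mul0r.
Qed.

Lemma inner_ge0 m (x : 'cV[C]_m) : 0 <= inner x x.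
Proof.
by rewrite innerE sumr_ge0 // => i _; rewrite mulrC -normCK exprn_ge0.
Qed.

Lemma inner_eq0 m (x : 'cV[C]_m) : (inner x x == 0) = (x == 0).
Proof.
apply/eqP/eqP=> [|->]; last exact: inner0r.
rewrite innerE => /eqP; rewrite psumr_eq0 => [/allP x0|i _]; last first.
  by rewrite mulrC -normCK exprn_ge0.
apply/matrixP=> i j; rewrite (ord1 j) mxE.
move: (x0 i (mem_index_enum i)); rewrite mulrC -normCK.
by rewrite sqrf_eq0 normr_eq0 => /eqP.
Qed.

Lemma inner_gt0 m (x : 'cV[C]_m) : (0 < inner x x) = (x != 0).
Proof. by rewrite lt_def inner_eq0 inner_ge0 andbT. Qed.

Lemma vnorm_sqr m (x : 'cV[C]_m) : vnorm x ^+ 2 = inner x x.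
Proof. by rewrite /vnorm sqrtCK. Qed.

Lemma vnorm_gt0 m (x : 'cV[C]_m) : (0 < vnorm x) = (x != 0).
Proof. by rewrite /vnorm sqrtC_gt0 inner_gt0. Qed.

Lemma vnorm_lt1 m (x : 'cV[C]_m) : (vnorm x < 1) = (inner x x < 1).
Proof. by rewrite /vnorm -{1}sqrtC1 ltr_sqrtC // nnegrE ?ler01 ?inner_ge0. Qed.

(* Polarization, with x + y and x + i y. *)
Lemma quad_form_eq0 m (B : 'M[C]_m) : (forall x, inner x (B *m x) = 0) -> B = 0.
Proof.
move=> B0.
have Bxy x y : inner x (B *m y) = 0.
  have := B0 (x + y); have := B0 (x + 'i *: y).
  rewrite !mulmxDr -!scalemxAr !innerDr !innerDl !innerZr !innerZl !B0.
  rewrite !mulr0 !add0r !addr0 conjCi mulNr addrC -mulrBr => /eqP.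
  rewrite mulf_eq0 (negPf (neq0Ci _)) subr_eq0 => /eqP ->.
  by rewrite -mulr2n => /eqP; rewrite mulrn_eq0 /= => /eqP.
apply/matrixP=> i j; have := Bxy (B *m delta_mx j 0) (delta_mx j 0).
by move/eqP; rewrite inner_eq0 -colE => /eqP/colP/(_ i); rewrite !mxE.
Qed.

Lemma matrix_colP m p (A B : 'M[C]_(m, p)) :
  (forall j, A *m (delta_mx j 0 : 'cV_p) = B *m delta_mx j 0) -> A = B.
Proof.
move=> AB; apply/matrixP=> i j.
by have := congr1 (fun x : 'cV[C]_m => x i 0) (AB j); rewrite /= -!colE !mxE.
Qed.

Lemma diag_mx_delta m (d : 'rV[C]_m) i :
  diag_mx d *m delta_mx i 0 = d 0 i *: (delta_mx i 0 : 'cV[C]_m).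
Proof.
apply/matrixP=> k j; rewrite mul_diag_mx !mxE (ord1 j) eqxx andbT.
by case: eqP => [->|]; rewrite ?mulr1 ?mulr0.
Qed.

End Adjoint.

Section Positive.
Variable C : numClosedFieldType.
Implicit Types (m p : nat).

Lemma psd_herm m (A : 'M[C]_m) : psd A -> adjmx A = A.
Proof.
move=> hA; apply/eqP; rewrite -subr_eq0; apply/eqP/quad_form_eq0 => x.
rewrite mulmxBl innerBr inner_adjmx adjmxK innerC.
by rewrite conj_Creal ?subrr // ger0_real.
Qed.

Lemma psd_compress m p (M : 'M[C]_p) (X : 'M[C]_(p, m)) :
  psd M -> psd (adjmx X *m M *m X).
Proof. by move=> hM x; rewrite -!mulmxA inner_adjmx adjmxK. Qed.

Lemma psd_diag m (d : 'rV[C]_m) : (forall i, 0 <= d 0 i) -> psd (diag_mx d).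
Proof.
move=> d_ge0 y; rewrite innerE sumr_ge0 // => i _.
by rewrite mul_diag_mx mxE mulrCA mulr_ge0 // mulrC -normCK exprn_ge0.
Qed.

Lemma psd_1_sub_isometry m p (V : 'M[C]_(m, p)) :
  adjmx V *m V = 1%:M -> psd (1%:M - V *m adjmx V).
Proof.
move=> hV x; set Q := 1%:M - _.
have QH : adjmx Q = Q by rewrite adjmxB adjmx1 adjmxM adjmxK.
have QQ : Q *m Q = Q.
  by rewrite mulmxBl mul1mx mulmxBr mulmx1 mulmxA -(mulmxA V) hV mulmx1 subrr subr0.
by rewrite -QQ -mulmxA inner_adjmx QH inner_ge0.
Qed.

Lemma psd_spectral m (A : 'M[C]_m) : psd A ->
  exists (U : 'M[C]_m) (d : 'rV[C]_m),
    [/\ adjmx U *m U = 1%:M, U *m adjmx U = 1%:M,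
         A = adjmx U *m diag_mx d *m U & forall i, 0 <= d 0 i].
Proof.
move=> hA; have A_normal : A \is normalmx.
  by apply/normalmxP; rewrite -adjmxE psd_herm.
have /orthomx_spectralP eA := A_normal.
set U := spectralmx A in eA; set d := spectral_diag A in eA.
have uU : U \is unitarymx by apply: spectral_unitarymx.
have UUt : U *m adjmx U = 1%:M by rewrite adjmxE; apply/unitarymxP.
have UtU : adjmx U *m U = 1%:M by rewrite adjmxE -[LHS]mul1mx mulmxA mulmxKtV.
have {}eA : A = adjmx U *m diag_mx d *m U by rewrite {1}eA invmx_unitary // -adjmxE.
exists U, d; split=> // i; have := hA (adjmx U *m delta_mx i 0).
rewrite eA -!mulmxA inner_adjmx adjmxK !mulmxA UUt !mul1mx.
by rewrite -(mulmxA _ U) UUt mulmx1 diag_mx_delta innerZr inner_deltal mxE eqxx mulr1.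
Qed.

Lemma psd_sqrt_exists m (A : 'M[C]_m) : psd A -> exists S, psd S /\ S *m S = A.
Proof.
move=> /psd_spectral [U [d [_ UUt -> d_ge0]]].
pose s := \row_i sqrtC (d 0 i).
exists (adjmx U *m diag_mx s *m U); split.
  by apply/psd_compress/psd_diag => i; rewrite mxE sqrtC_ge0.
rewrite -!mulmxA (mulmxA U) UUt mul1mx (mulmxA (diag_mx s)) mulmx_diag.
rewrite !mulmxA; congr (_ *m diag_mx _ *m _).
by apply/rowP=> i; rewrite !mxE -expr2 sqrtCK.
Qed.

Lemma psqrtP m (A : 'M[C]_m) : psd A -> psd (psqrt A) /\ psqrt A *m psqrt A = A.
Proof. by move=> /psd_sqrt_exists; apply: epsilon_spec. Qed.

Lemma psd_ker m (A : 'M[C]_m) x : psd A -> inner x (A *m x) = 0 -> A *m x = 0.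
Proof.
move=> /psqrtP [hS <-]; rewrite -mulmxA inner_adjmx psd_herm // => /eqP.
by rewrite inner_eq0 => /eqP ->; rewrite mulmx0.
Qed.

(* z := T v - c v satisfies T z = - c z, which positivity of T only allows
   for z = 0 when c > 0. *)
Lemma psd_sqr_eigen m (T : 'M[C]_m) c (v : 'cV[C]_m) : psd T -> 0 <= c ->
  T *m (T *m v) = c ^+ 2 *: v -> T *m v = c *: v.
Proof.
move=> hT; rewrite le_eqVlt => /predU1P[<- | c_gt0] TTv.
  apply/eqP; rewrite scale0r -inner_eq0 -{1}(psd_herm hT) -inner_adjmx TTv.
  by rewrite expr0n scale0r inner0r.
set z := T *m v - c *: v.
have Tz : T *m z = - c *: z.
  rewrite /z mulmxBr TTv -scalemxAr scalerBr scalerA mulNr -expr2.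
  by rewrite !scaleNr opprK addrC.
have Nc_lt0 : - c < 0 by rewrite oppr_lt0.
have z_le0 : inner z z <= 0.
  by rewrite -(nmulr_rge0 _ Nc_lt0) -innerZr -Tz; apply: hT.
by apply/eqP; rewrite -subr_eq0 -inner_eq0 eq_le z_le0 inner_ge0.
Qed.

Lemma psd_sqrt_unique m (S T : 'M[C]_m) :
  psd S -> psd T -> S *m S = T *m T -> S = T.
Proof.
move=> hS hT eST; have [U [d [UtU UUt eS d_ge0]]] := psd_spectral hS.
pose v i := adjmx U *m (delta_mx i 0 : 'cV[C]_m).
have Sv i : S *m v i = d 0 i *: v i.
  by rewrite eS -!mulmxA (mulmxA U) UUt mul1mx diag_mx_delta scalemxAr.
have Tv i : T *m v i = d 0 i *: v i.
  apply: psd_sqr_eigen => //.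
  by rewrite mulmxA -eST -mulmxA Sv -scalemxAr Sv scalerA expr2.
have eSUT : S *m adjmx U = T *m adjmx U.
  by apply: matrix_colP => j; rewrite -!mulmxA Sv Tv.
by rewrite -[S]mulmx1 -[T]mulmx1 -UtU !mulmxA eSUT.
Qed.

Lemma psqrt_unique m (A S : 'M[C]_m) : psd A -> psd S -> S *m S = A -> psqrt A = S.
Proof.
move=> /psqrtP [hQ eQ] hS eS.
by apply: psd_sqrt_unique => //; rewrite eQ.
Qed.

Lemma orth_ker_psd m (A : 'M[C]_m) : psd A ->
  forall x, orthP (kerP A) x <-> colspan A x.
Proof.
move=> hA x; split=> [x_orth | [y ->] z Az]; last first.
  by rewrite inner_adjmx psd_herm // Az inner0l.
have [U [d [UtU UUt eA _]]] := psd_spectral hA.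
pose dinv := \row_i (d 0 i)^-1.
exists (adjmx U *m diag_mx dinv *m U *m x).
have UUx (y : 'cV_m) : U *m (adjmx U *m y) = y by rewrite mulmxA UUt mul1mx.
rewrite eA -!mulmxA UUx (mulmxA (diag_mx d)) mulmx_diag.
have Ux0 i : d 0 i = 0 -> (U *m x) i 0 = 0.
  move=> d0; rewrite -inner_deltal inner_adjmx x_orth // /kerP eA -!mulmxA UUx.
  by rewrite diag_mx_delta d0 scale0r mulmx0.
suff -> : diag_mx (\row_j (d 0 j * dinv 0 j)) *m (U *m x) = U *m x.
  by rewrite mulmxA UtU mul1mx.
move: Ux0; move: (U *m x) => w w0; apply/matrixP=> i j.
rewrite (ord1 j) mul_diag_mx !mxE.
by have [/[dup] /w0 -> | /mulfV ->] := eqVneq (d 0 i) 0; rewrite ?mulr0 ?mul1r.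
Qed.

Lemma posdef_det_neq0 m (A : 'M[C]_m) :
  (forall y, y != 0 -> 0 < inner y (A *m y)) -> \det A != 0.
Proof.
move=> A_pos; apply/negP => /det0P [v v_neq0 vA].
have /A_pos : adjmx v != 0 by rewrite adjmx_eq0.
by rewrite /inner adjmxK mulmxA vA mul0mx mxE ltxx.
Qed.

End Positive.

Section ColumnSpace.
Variable C : numClosedFieldType.
Implicit Types (m p q : nat).

(* Column spaces are compared as row spaces of transposes, as in mxalgebra. *)
Lemma colspan_submx m p (A : 'M[C]_(m, p)) x : colspan A x <-> (x^T <= A^T)%MS.
Proof.
split=> [[y ->]|/submxP [D eD]].
  by apply/submxP; exists y^T; rewrite trmx_mul.
by exists D^T; rewrite -[x]trmxK eD trmx_mul trmxK.
Qed.

Lemma colspan_sub m p q (A : 'M[C]_(m, p)) (B : 'M[C]_(m, q)) :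
  (forall x, colspan A x -> colspan B x) -> (A^T <= B^T)%MS.
Proof.
move=> AB; apply/row_subP => i; rewrite -tr_col colE.
by apply/colspan_submx/AB; exists (delta_mx i 0).
Qed.

Lemma colspan_factor m p q (A : 'M[C]_(m, p)) (B : 'M[C]_(m, q)) :
  (A^T <= B^T)%MS -> exists Y, A = B *m Y.
Proof.
by move=> /submxP [D eD]; exists D^T; rewrite -[A]trmxK eD trmx_mul trmxK.
Qed.

Lemma colspan_eqmx m p q (A : 'M[C]_(m, p)) (B : 'M[C]_(m, q)) x :
  (A^T == B^T)%MS -> colspan A x <-> colspan B x.
Proof. by move=> /eqmxP AB; rewrite !colspan_submx AB. Qed.

Lemma exists_isometry_onto m p (A : 'M[C]_(m, p)) :
  exists d (V : 'M[C]_(m, d)), adjmx V *m V = 1%:M /\ (V^T == A^T)%MS.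
Proof.
pose W := schmidt (row_base A^T).
have /unitarymxP W1 : W \is unitarymx by apply/schmidt_unitarymx/rank_leq_col.
exists (\rank A^T), W^T; split.
  by apply: trmx_inj; rewrite trmx_mul trmx1 trmxK -W1 /adjmx trmxK.
rewrite trmxK; apply/eqmxP.
exact: eqmx_trans (eqmx_schmidt_free (row_base_free _)) (eq_row_base _).
Qed.

End ColumnSpace.

Lemma det_sylvester (C : comNzRingType) m (x : 'cV[C]_m) (y : 'rV[C]_m) :
  \det (1%:M - x *m y) = 1 - (y *m x) 0 0.
Proof.
pose B := block_mx (1%:M : 'M_m) x y (1%:M : 'M_1).
have B_lu : B = block_mx 1%:M 0 y 1%:M *m block_mx 1%:M x 0 (1%:M - y *m x).
  by rewrite mulmx_block ?mul1mx ?mulmx1 ?mul0mx ?mulmx0 ?addr0 ?add0r addrC subrK.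
have B_ul : B = block_mx 1%:M x 0 1%:M *m block_mx (1%:M - x *m y) 0 y 1%:M.
  by rewrite mulmx_block ?mul1mx ?mulmx1 ?mul0mx ?mulmx0 ?addr0 ?add0r subrK.
have := congr1 determinant B_lu; rewrite {1}B_ul !det_mulmx.
rewrite det_lblock det_ublock det_ublock det_lblock !det1 !mul1r !mulr1.
by move=> ->; rewrite det_mx11 !mxE.
Qed.

Lemma bernoulli_ineq (F : numDomainType) (h : F) k :
  0 <= h -> 1 + h *+ k <= (1 + h) ^+ k.
Proof.
move=> h_ge0; elim: k => [|k IH]; first by rewrite mulr0n addr0 expr0.
rewrite exprS mulrS (le_trans _ (ler_wpM2l _ IH)) ?addr_ge0 //.
rewrite mulrDl mul1r mulrDr mulr1 addrA (addrAC 1) lerD2l lerDl.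
by rewrite mulr_ge0 // mulrn_wge0.
Qed.

Lemma complex_archimedean (R : realType) : Num.archimedean_axiom R[i].
Proof.
move=> x; case: `|x| (normr_ge0 x) => a b /[dup] /ger0_Im /= b0.
rewrite b0 lecE /= => /andP[_ a_ge0]; exists (Num.bound a).
rewrite -[X in _ < X](rmorph_nat (real_complex R)) complexr0 ltcR.
exact: archi_boundP.
Qed.

(* With c = 1 / (1 + h), Bernoulli's inequality gives c^k <= 1 / (1 + k h). *)
Lemma eventually_geometric_lt (F : numFieldType) (c D eps : F) :
  Num.archimedean_axiom F -> 0 <= c -> c < 1 -> 0 <= D -> 0 < eps ->
  exists M, forall k, (M <= k)%N -> c ^+ k * D < eps.
Proof.
move=> archi c_ge0 c_lt1 D_ge0 eps_gt0.
suff [M hM] : exists M, c ^+ M * D < eps.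
  exists M => k kM; apply: le_lt_trans hM.
  by rewrite ler_wpM2r // ler_wiXn2l // ltW.
have [->|c_neq0] := eqVneq c 0; first by exists 1%N; rewrite expr1 mul0r.
have c_gt0 : 0 < c by rewrite lt_def c_neq0.
have [h h_gt0 ch] : exists2 h, 0 < h & c = (1 + h)^-1.
  by exists (c^-1 - 1); rewrite ?subr_gt0 ?invf_gt1 // addrC subrK invrK.
have eh_gt0 : 0 < eps * h by rewrite mulr_gt0.
have [k hk] := archi (D / (eps * h)).
have Dk : D < eps * (h *+ k).
  rewrite mulrnAr -mulr_natl -ltr_pdivrMr //.
  by rewrite -[_ / _]ger0_norm ?divr_ge0 ?(ltW eh_gt0).
exists k; rewrite ch exprVn mulrC ltr_pdivrMr ?exprn_gt0 ?addr_gt0 //.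
apply: (lt_le_trans Dk); rewrite ler_wpM2l ?(ltW eps_gt0) //.
by rewrite (le_trans _ (bernoulli_ineq k (ltW h_gt0))) // lerDr ler01.
Qed.

Lemma exists_argmin_nat (f : nat -> nat) : exists N, forall k, (f N <= f k)%N.
Proof.
suff min_below b : forall N, (f N <= b)%N -> exists M, forall k, (f M <= f k)%N.
  exact: (min_below (f 0%N) 0%N).
elim: b => [|b IH] N fN.
  by exists N => k; move: fN; rewrite leqn0 => /eqP ->.
have [[k fk] | no_smaller] := classic (exists k, (f k < f N)%N).
  by apply: (IH k); rewrite -ltnS (leq_trans fk fN).
by exists N => k; rewrite leqNgt; apply/negP => fk; apply: no_smaller; exists k.
Qed.

Section Compression.
Variables (C : numClosedFieldType) (m d : nat) (V : 'M[C]_(m, d)) (A : 'M[C]_m).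
Hypotheses (hV : adjmx V *m V = 1%:M) (hA : psd A) (AV : (A^T == V^T)%MS).
Local Notation T := (adjmx V *m A *m V).

Lemma orth_ker_colspan x : orthP (kerP A) x <-> colspan V x.
Proof. by rewrite orth_ker_psd //; apply: colspan_eqmx. Qed.

Lemma colspan_mulmx x : colspan V (A *m x).
Proof. by apply/(colspan_eqmx _ AV); exists x. Qed.

Lemma ker_orth_colspan x : orthP (colspan V) x -> A *m x = 0.
Proof.
move=> /(_ _ (colspan_mulmx (A *m x))); rewrite innerC inner_adjmx psd_herm //.
by move=> /eqP; rewrite conjC_eq0 inner_eq0 => /eqP.
Qed.

Lemma compress_posdef y : y != 0 -> 0 < inner y (T *m y).
Proof.
move=> y_neq0; rewrite lt_def psd_compress // andbT.
apply: (contraNneq _ y_neq0); rewrite -!mulmxA inner_adjmx adjmxK.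
move=> /(psd_ker hA) AVy0; apply/eqP.
have /orth_ker_colspan/(_ _ AVy0) : colspan V (V *m y) by exists y.
move/eqP; rewrite inner_eq0 => /eqP Vy0.
by rewrite -[y]mul1mx -hV -mulmxA Vy0 mulmx0.
Qed.

Lemma compress_decomp : V *m T *m adjmx V = A.
Proof.
have VVA : V *m adjmx V *m A = A.
  have [Y ->] := colspan_factor (andP AV).1.
  by rewrite -mulmxA (mulmxA (adjmx V)) hV mul1mx.
have AVV : A *m (V *m adjmx V) = A.
  by apply: adjmx_inj; rewrite !adjmxM adjmxK psd_herm // mulmxA.
by rewrite !mulmxA VVA -mulmxA AVV.
Qed.

Lemma psqrt_compress : psqrt A = V *m psqrt T *m adjmx V.
Proof.
have [hQ eQ] := psqrtP (psd_compress V hA).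
apply: psqrt_unique => //; first by rewrite -{1}[V]adjmxK; apply: psd_compress.
rewrite !mulmxA -(mulmxA _ (adjmx V)) hV mulmx1 -(mulmxA V) eQ.
exact: compress_decomp.
Qed.

Lemma compress_psqrt_sandwich (Q : 'M[C]_m) :
  adjmx V *m (psqrt A *m Q *m psqrt A) *m V
  = psqrt T *m (adjmx V *m Q *m V) *m psqrt T.
Proof. by rewrite psqrt_compress !mulmxA hV mul1mx -!mulmxA hV mulmx1. Qed.

End Compression.

Lemma compress_1_sub_ketbra (C : numClosedFieldType) m d (V : 'M[C]_(m, d)) u :
  adjmx V *m V = 1%:M ->
  adjmx V *m (1%:M - ketbra u u) *m V = 1%:M - ketbra (adjmx V *m u) (adjmx V *m u).
Proof.
move=> hV; rewrite mulmxBr mulmxBl mulmx1 hV /ketbra adjmxM adjmxK.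
by rewrite !mulmxA.
Qed.

Lemma bessel_ineq (C : numClosedFieldType) m d (V : 'M[C]_(m, d)) u :
  adjmx V *m V = 1%:M -> inner (adjmx V *m u) (adjmx V *m u) <= inner u u.
Proof.
move=> /psd_1_sub_isometry /(_ u).
by rewrite mulmxBl mul1mx innerBr -mulmxA (inner_adjmx V) subr_ge0.
Qed.

Section Iteration.
Variables (C : numClosedFieldType) (n : nat) (u : 'cV[C]_n) (R0 : 'M[C]_n).
Hypotheses (hu : inner u u = 1) (hR0 : psd R0).
Local Notation Rn := (Rseq (ketbra u u) R0).

Lemma Rseq_psd k : psd (Rn k).
Proof.
elim: k => [//|k IH] /=; have [hS _] := psqrtP IH.
rewrite -{1}(psd_herm hS); apply/psd_compress/psd_1_sub_isometry.
by rewrite adjmx_mulmx_col hu.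
Qed.

Lemma Rseq_ker_sub k (x : 'cV[C]_n) : Rn k *m x = 0 -> Rn k.+1 *m x = 0.
Proof.
move=> Rx0; have [hS eS] := psqrtP (Rseq_psd k).
have : inner (psqrt (Rn k) *m x) (psqrt (Rn k) *m x) = 0.
  by rewrite -{1}(psd_herm hS) -inner_adjmx mulmxA eS Rx0 inner0r.
by move/eqP; rewrite inner_eq0 => /eqP Sx0 /=; rewrite -mulmxA Sx0 mulmx0.
Qed.

Lemma Rseq_orth_ker_sub k (x : 'cV[C]_n) :
  orthP (kerP (Rn k.+1)) x -> orthP (kerP (Rn k)) x.
Proof. by move=> x_orth y /Rseq_ker_sub; apply: x_orth. Qed.

Lemma Rseq_range_sub k : ((Rn k.+1)^T <= (Rn k)^T)%MS.
Proof.
apply: colspan_sub => x /(orth_ker_psd (Rseq_psd _)) /Rseq_orth_ker_sub.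
by move=> /(orth_ker_psd (Rseq_psd _)).
Qed.

Lemma Rseq_range_decreasing N k : (N <= k)%N -> ((Rn k)^T <= (Rn N)^T)%MS.
Proof.
elim: k => [|k IH]; first by rewrite leqn0 => /eqP ->.
rewrite leq_eqVlt => /predU1P[-> // | /IH].
exact: submx_trans (Rseq_range_sub k).
Qed.

Lemma Rseq_range_stable :
  exists N, forall k, (N <= k)%N -> ((Rn k)^T == (Rn N)^T)%MS.
Proof.
have [N rank_min] := exists_argmin_nat (fun k => \rank (Rn k)^T).
exists N => k kN; have le_kN := Rseq_range_decreasing kN.
have [_ <-] := mxrank_leqif_sup le_kN.
by rewrite le_kN eqn_leq rank_min mxrankS.
Qed.

Lemma Rseq_compress_step d (V : 'M[C]_(n, d)) k :
  adjmx V *m V = 1%:M -> ((Rn k)^T == V^T)%MS ->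
  adjmx V *m Rn k.+1 *m V = psqrt (adjmx V *m Rn k *m V)
    *m (1%:M - ketbra (adjmx V *m u) (adjmx V *m u)) *m psqrt (adjmx V *m Rn k *m V).
Proof.
move=> hV RV; rewrite -compress_1_sub_ketbra //.
exact: compress_psqrt_sandwich hV (Rseq_psd k) RV _.
Qed.

End Iteration.

Section SqrtIteration.
Variables (C : numClosedFieldType) (d N : nat) (T : nat -> 'M[C]_d) (w : 'cV[C]_d).
Hypothesis T_psd : forall k, (N <= k)%N -> psd (T k).
Hypothesis T_posdef :
  forall k, (N <= k)%N -> forall y, y != 0 -> 0 < inner y (T k *m y).
Hypothesis T_step : forall k, (N <= k)%N ->
  T k.+1 = psqrt (T k) *m (1%:M - ketbra w w) *m psqrt (T k).

Lemma sqrt_iter_fixed : w = 0 -> forall k, (N <= k)%N -> T k.+1 = T k.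
Proof.
move=> w0 k kN; rewrite T_step // w0 /ketbra mul0mx subr0 mulmx1.
by have [_ ->] := psqrtP (T_psd kN).
Qed.

Lemma det_sqrt_iter_step k :
  (N <= k)%N -> \det (T k.+1) = (1 - inner w w) * \det (T k).
Proof.
move=> kN; rewrite T_step // !det_mulmx /ketbra det_sylvester adjmx_mulmx_col.
have [_ {3}<-] := psqrtP (T_psd kN).
by rewrite mxE eqxx mulr1n det_mulmx mulrAC mulrC.
Qed.

Lemma det_sqrt_iter k : (N <= k)%N ->
  \det (T k) = (1 - inner w w) ^+ (k - N) * \det (T N).
Proof.
move=> /subnKC <-; elim: (k - N)%N => [|j IH].
  by rewrite addn0 subnn expr0 mul1r.
by rewrite addnS det_sqrt_iter_step ?leq_addr // IH addKn -addnS addKn exprS mulrA.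
Qed.

(* [1 - <w, w>] is a factor of the nonzero determinant of [T (N + 1)]. *)
Lemma sqrt_iter_inner_neq1 : inner w w != 1.
Proof.
apply/eqP => w1; have := posdef_det_neq0 (T_posdef (leqnSn N)).
by rewrite det_sqrt_iter_step // w1 subrr mul0r eqxx.
Qed.

Lemma det_sqrt_iter_vanish : Num.archimedean_axiom C -> w != 0 -> inner w w <= 1 ->
  forall eps, 0 < eps -> exists M, forall k, (M <= k)%N -> `|\det (T k)| < eps.
Proof.
move=> archi w_neq0 w_le1 eps eps_gt0.
have c_ge0 : 0 <= 1 - inner w w by rewrite subr_ge0.
have c_lt1 : 1 - inner w w < 1 by rewrite ltrBlDr ltrDl inner_gt0.
have [M hM] :=
  eventually_geometric_lt archi c_ge0 c_lt1 (normr_ge0 (\det (T N))) eps_gt0.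
exists (M + N)%N => k kMN; have kN := leq_trans (leq_addl M N) kMN.
by rewrite det_sqrt_iter // normrM normrX ger0_norm // hM // leq_subRL // addnC.
Qed.

End SqrtIteration.

Theorem proposition2p3 (R : realType) (n : nat) (u : 'cV[R[i]]_n) (R0 : 'M[R[i]]_n) :
  vnorm u = 1 -> psd R0 ->
  let P := ketbra u u in
  let Rn := Rseq P R0 in
  let K := fun k => kerP (Rn k) in
  let E := fun k => orthP (K k) in
  (* (1) *)
  ((forall k x, K k x -> K k.+1 x) /\ (forall k x, E k.+1 x -> E k x)) /\
  (* (2): E is represented by an isometry V whose columns form an
     orthonormal basis of E *)
  exists (N d : nat) (V : 'M[R[i]]_(n, d)),
    adjmx V *m V = 1%:M /\
    let inE := colspan V in
    (forall k, (N <= k)%N -> forall x, E k x <-> inE x) /\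
    (* T k = R_k|_E in the orthonormal basis V *)
    let T := fun k => adjmx V *m Rn k *m V in
    (* (3) *)
    (forall k, (N <= k)%N ->
       (forall x, inE x -> inE (Rn k *m x)) /\
       (forall x, orthP inE x -> orthP inE (Rn k *m x)) /\
       (forall x, orthP inE x -> Rn k *m x = 0) /\
       psd (T k) /\
       (forall y : 'cV_d, y != 0 -> 0 < inner y (T k *m y))) /\
    (* (4) u_E = P_E u, in coordinates *)
    let uE := adjmx V *m u in
    (forall k, (N <= k)%N ->
       T k.+1 = psqrt (T k) *m (1%:M - ketbra uE uE) *m psqrt (T k)) /\
    (* (5) *)
    (uE = 0 -> forall k, (N <= k)%N -> T k.+1 = T k) /\
    (uE != 0 ->
       (0 < vnorm uE /\ vnorm uE < 1) /\
       (forall k, (N <= k)%N -> \det (T k.+1) = (1 - vnorm uE ^+ 2) * \det (T k)) /\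
       (forall k, (N <= k)%N -> \det (T k) = (1 - vnorm uE ^+ 2) ^+ (k - N) * \det (T N)) /\
       (forall eps : R[i], 0 < eps ->
          exists M, forall k, (M <= k)%N -> `|\det (T k)| < eps)).
Proof.
move=> u1 hR0 P Rn K E; have hu : inner u u = 1 by rewrite -vnorm_sqr u1 expr1n.
split; first by split=> k x; [exact: Rseq_ker_sub | exact: Rseq_orth_ker_sub].
have [N RN] := Rseq_range_stable hu hR0.
have [d [V [hV VRN]]] := exists_isometry_onto (Rn N).
have RV k : (N <= k)%N -> ((Rn k)^T == V^T)%MS.
  move=> kN; apply/eqmxP.
  exact: eqmx_trans (eqmxP (RN k kN)) (eqmx_sym (eqmxP VRN)).
have hRk k := Rseq_psd hu hR0 k.
exists N, d, V; split=> //; split=> [k kN x | T].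
  exact: orth_ker_colspan (hRk k) (RV k kN) x.
have T_psd k : (N <= k)%N -> psd (T k) by move=> _; apply/psd_compress/hRk.
have T_posdef k : (N <= k)%N -> forall y, y != 0 -> 0 < inner y (T k *m y).
  by move=> kN; apply: compress_posdef hV (hRk k) (RV k kN).
have T_step k (kN : (N <= k)%N) := Rseq_compress_step hu hR0 hV (RV k kN).
split=> [k kN | uE].
  have ker0 := ker_orth_colspan (hRk k) (RV k kN).
  split; first by move=> x _; apply: colspan_mulmx (RV k kN) x.
  split; first by move=> x /ker0 -> y _; apply: inner0r.
  by split; [apply: ker0 | split; [apply: T_psd | apply: T_posdef]].
split=> //; split=> [uE0 | uE_neq0]; first exact: sqrt_iter_fixed T_psd T_step uE0.
have uE_le1 : inner uE uE <= 1 by rewrite -hu bessel_ineq.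
split; first by rewrite vnorm_gt0 vnorm_lt1 lt_neqAle uE_le1
                        (sqrt_iter_inner_neq1 T_psd T_posdef T_step).
rewrite vnorm_sqr; split; first exact: det_sqrt_iter_step T_psd T_step.
split; first exact: det_sqrt_iter T_psd T_step.
exact: det_sqrt_iter_vanish T_psd T_step (@complex_archimedean R) uE_neq0 uE_le1.
Qed.
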